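(* Let $\Upsilon$ be a bundle that is a run of the protocol $\Pi$ and is compatible with $\leadsto$. For all strands $z_0,z_1$, all messages $t,t_0,t_1$, all states $m_0,m_1$ and all keys $esk_0,esk_1,k_0,k_1$: if $\mathrm{htin}(z_0,2,\mathrm{extend}(esk_0,k_0,\mathrm{pcr}(m_0),t_0))$, $\mathrm{htin}(z_1,2,\mathrm{extend}(esk_1,k_1,\mathrm{pcr}(m_1),t_1))$, $(z_0,1)\prec(z_1,0)$, and $m_1$ has $t$, then either $\mathrm{ex}(t_0,m_0)$ is a subterm of $m_1$, or there exist a strand $z$, a state $m$ and keys $esk,k$ such that $\mathrm{htin}(z,2,\mathrm{extend}(esk,k,\mathrm{pcr}(m),t))$, $(z_0,1)\prec(z,0)$ and $(z,1)\prec(z_1,0)$.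
   Context: Messages are terms of a free order-sorted algebra with atom sorts $\mathsf{A}$ (asymmetric keys), $\mathsf{S}$ (symmetric keys), $\mathsf{D}$, $\mathsf{E}$, tag constants $g_0,g_1,\dots$, pairing $(\cdot,\cdot)$, encryption $\{t\}_k$, hashing $\#(t)$ (of sort $\mathsf{S}$), and key inverse (asymmetric $a_i^{-1}=b_i$, symmetric keys self-inverse); $s_0$ is a fixed symmetric-key constant. TPM states are terms generated by $\mathrm{bt}$ and $\mathrm{ex}(t,m)$ ($t$ a message, $m$ a state). $\mathrm{pcr}$ maps states to messages: $\mathrm{pcr}(\mathrm{bt})=s_0$, $\mathrm{pcr}(\mathrm{ex}(t,m))=\#(t,\mathrm{pcr}(m))$; $\mathrm{pcr}$ is assumed injective. The transition relation: $m_0\leadsto m_1$ iff $m_1=\mathrm{bt}$, or $m_1=\mathrm{ex}(t,m_0)$ for some $t$, or $m_0=m_1$. A path is $\pi:\mathbb{N}\to$ states with $\pi(0)=\mathrm{bt}$ and $\pi(i)\leadsto\pi(i+1)$. A state $m$ has $t$ if some $\mathrm{ex}(t,m')$ is a subterm of $m$; state $m$ is a subterm of $m'$ if $m'=\mathrm{ex}(t_1,\dots\mathrm{ex}(t_r,m)\dots)$, $r\ge0$. Strand spaces: a trace is a finite sequence of events $+t$ (transmit) or $-t$ (receive). A strand space $\Theta$ maps strands to traces; nodes are $(s,i)$ with $0\le i<|\Theta(s)|$. A bundle $(\Theta,\to)$ is a finite acyclic graph on the nodes whose edges are communication edges $n_0\to n_1$ (with $n_0$ transmitting and $n_1$ receiving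 the same message, every reception having exactly one incoming such edge) and strand-succession edges $(s,i)\Rightarrow(s,i+1)$; $\prec$ is the transitive closure of $\to\cup\Rightarrow$. A bundle is a run of $\Pi$ if each strand's trace is a prefix of some trace of some role of $\Pi$ (the adversary roles create/tag/pair/separate/encrypt/decrypt/hash, the TPM roles boot, extend, quote, decrypt, createkey, and Alice's role). $\mathrm{htin}(z,h,c)$ means strand $z$ has at least $h$ events and its trace is a prefix of $c$. Here, following the paper's abbreviation, $\mathrm{extend}(esk,k,p,t)$ denotes the state-bearing portion of the TPM extend role, the trace $-\{g_0,p\}_{\#k}\Rightarrow+\{g_0,\#(t,p)\}_{\#k}$, so $(z,0)$ receives the incoming state and $(z,1)$ transmits the outgoing state. Annotations: in each TPM role with a state-bearing pair $-\{g_0,p_0\}_{\#k}\Rightarrow+\{g_0,p_1\}_{\#k}$ (extend: $p_1=\#(t,p_0)$; boot: $p_1=s_0$; quote and decrypt: $p_1=p_0$), the transmission is annotated with $\{(m_0,m_1)\mid p_0=\mathrm{pcr}(m_0),\ p_1=\mathrm{pcr}(m_1)\}\cap\leadsto$; no other events are annotated, and a node annotated by the extend role is an instance of no other role. A bundle $\Upsilon$ is compatible with $\leadsto$ if there exist $\ell\in\mathbb{N}$, a bijection $f$ from the annotated nodes of $\Upsilon$ to $\{0,\dots,\ell-1\}$, and a path $\pi$ such that $n_0\prec n_1\iff f(n_0)<f(n_1)$ for annotated nodes, and every annotated node $n$ with annotation $a$ satisfies $(\pi(f(n)),\pi(f(n)+1))\in a$. *)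

From Stdlib Require Import List Arith Relations.
Import ListNotations.

(* Atoms: sort A (asymmetric keys a_i (false) and b_i = a_i^{-1} (true)),
   sort S (symmetric keys; s0 := AtS 0), sorts D and E; tags g_n;
   pairing, encryption {t}_k, hashing #t (of sort S). *)
Inductive msg : Type :=
| AtA : nat -> bool -> msg
| AtS : nat -> msg
| AtD : nat -> msg
| AtE : nat -> msg
| Tag : nat -> msg
| Pair : msg -> msg -> msg
| Enc : msg -> msg -> msg        (* Enc t k = {t}_k *)
| Hash : msg -> msg.

Definition s0 : msg := AtS 0.

(* messages of a key sort (A or S; hashes have sort S) *)
Definition is_key (k : msg) : Prop :=
  match k with AtA _ _ | AtS _ | Hash _ => True | _ => False end.

Definition is_atom (a : msg) : Prop :=
  match a with AtA _ _ | AtS _ | AtD _ | AtE _ => True | _ => False end.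

Definition inv (k : msg) : msg :=
  match k with AtA n b => AtA n (negb b) | _ => k end.

Inductive state : Type :=
| bt : state
| ex : msg -> state -> state.

Fixpoint pcr (m : state) : msg :=
  match m with
  | bt => s0
  | ex t m' => Hash (Pair t (pcr m'))
  end.

Inductive state_sub (m : state) : state -> Prop :=
| sub_refl : state_sub m m
| sub_ex : forall t m', state_sub m m' -> state_sub m (ex t m').

Definition has_msg (m : state) (t : msg) : Prop :=
  exists m', state_sub (ex t m') m.

Definition leadsto (m0 m1 : state) : Prop :=
  m1 = bt \/ (exists t, m1 = ex t m0) \/ m0 = m1.

Definition is_path (pi : nat -> state) : Prop :=
  pi 0 = bt /\ forall i, leadsto (pi i) (pi (S i)).

Inductive event : Type :=
| Snd : msg -> event
| Rcv : msg -> event.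

Definition trace := list event.

Definition prefix (l c : trace) : Prop := exists r, c = l ++ r.

Definition strand := nat.
Definition node := (strand * nat)%type.

Record bundle := {
  Theta : strand -> trace;
  comm : node -> node -> Prop
}.

Definition ev (B : bundle) (n : node) : option event :=
  nth_error (Theta B (fst n)) (snd n).

Definition is_node (B : bundle) (n : node) : Prop :=
  snd n < length (Theta B (fst n)).

Definition succ_edge (B : bundle) (n0 n1 : node) : Prop :=
  fst n1 = fst n0 /\ snd n1 = S (snd n0) /\ is_node B n1.

Definition prec (B : bundle) : node -> node -> Prop :=
  clos_trans node (fun a b => comm B a b \/ succ_edge B a b).

Definition is_bundle (B : bundle) : Prop :=
  (* finitely many (nonempty) strands, hence finitely many nodes *)
  (exists l : list strand, forall s, Theta B s <> [] -> In s l) /\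
  (forall n0 n1, comm B n0 n1 ->
     exists t, ev B n0 = Some (Snd t) /\ ev B n1 = Some (Rcv t)) /\
  (forall n1 t, ev B n1 = Some (Rcv t) ->
     exists n0, comm B n0 n1 /\ forall n0', comm B n0' n1 -> n0' = n0) /\
  (forall n, ~ prec B n n).

(* A role instance: a trace together with its (at most one) annotated
   state-bearing pair: rstate = Some (i, p0, p1) means events i-1, i are
   -{g0,p0}_{#k} => +{g0,p1}_{#k} and event i is annotated. *)
Record role := mkrole {
  rtrace : trace;
  rstate : option (nat * msg * msg)
}.

Definition st_msg (p k : msg) : msg := Enc (Pair (Tag 0) p) (Hash k).

(* the state-bearing portion of the TPM extend role (paper's abbreviation) *)
Definition extend (esk k p t : msg) : trace :=
  [Rcv (st_msg p k); Snd (st_msg (Hash (Pair t p)) k)].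

Definition extend_role (esk k p t : msg) : role :=
  mkrole (extend esk k p t) (Some (1, p, Hash (Pair t p))).

Inductive adversary_role : role -> Prop :=
| adv_create : forall a, is_atom a -> adversary_role (mkrole [Snd a] None)
| adv_tag : forall n, adversary_role (mkrole [Snd (Tag n)] None)
| adv_pair : forall a b, adversary_role (mkrole [Rcv a; Rcv b; Snd (Pair a b)] None)
| adv_sep : forall a b, adversary_role (mkrole [Rcv (Pair a b); Snd a; Snd b] None)
| adv_enc : forall t k, is_key k ->
    adversary_role (mkrole [Rcv k; Rcv t; Snd (Enc t k)] None)
| adv_dec : forall t k, is_key k ->
    adversary_role (mkrole [Rcv (Enc t k); Rcv (inv k); Snd t] None)
| adv_hash : forall t, adversary_role (mkrole [Rcv t; Snd (Hash t)] None).

(* Shape of every annotated role of the protocol: TPM boot (p1 = s0),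
   quote/decrypt (p1 = p0), or extend (p1 = #(t,p0)). *)
Definition role_ok (r : role) : Prop :=
  match rstate r with
  | None => True
  | Some (i, p0, p1) =>
      (exists k, 1 <= i /\
         nth_error (rtrace r) (i - 1) = Some (Rcv (st_msg p0 k)) /\
         nth_error (rtrace r) i = Some (Snd (st_msg p1 k))) /\
      (p1 = s0 \/ p1 = p0 \/
       exists esk k t, is_key esk /\ is_key k /\ r = extend_role esk k p0 t)
  end.

Definition protocol_ok (Pi : role -> Prop) : Prop :=
  (forall r, adversary_role r -> Pi r) /\
  (forall esk k p t, is_key esk -> is_key k -> Pi (extend_role esk k p t)) /\
  (forall r, Pi r -> role_ok r).

Definition run_of (Pi : role -> Prop) (B : bundle) : Prop :=
  forall s, exists r, Pi r /\ prefix (Theta B s) (rtrace r).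

Definition annot (Pi : role -> Prop) (B : bundle) (n : node) (p0 p1 : msg) : Prop :=
  is_node B n /\
  exists r, Pi r /\ prefix (Theta B (fst n)) (rtrace r) /\
            rstate r = Some (snd n, p0, p1).

Definition annotated (Pi : role -> Prop) (B : bundle) (n : node) : Prop :=
  exists p0 p1, annot Pi B n p0 p1.

Definition ann_rel (p0 p1 : msg) (m0 m1 : state) : Prop :=
  p0 = pcr m0 /\ p1 = pcr m1 /\ leadsto m0 m1.

Definition compatible (Pi : role -> Prop) (B : bundle) : Prop :=
  exists (l : nat) (f : node -> nat) (pi : nat -> state),
    is_path pi /\
    (forall n, annotated Pi B n -> f n < l) /\
    (forall n n', annotated Pi B n -> annotated Pi B n' -> f n = f n' -> n = n') /\
    (forall j, j < l -> exists n, annotated Pi B n /\ f n = j) /\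
    (forall n0 n1, annotated Pi B n0 -> annotated Pi B n1 ->
        (prec B n0 n1 <-> f n0 < f n1)) /\
    (forall n p0 p1, annot Pi B n p0 p1 -> ann_rel p0 p1 (pi (f n)) (pi (S (f n)))).

Definition htin (B : bundle) (z : strand) (h : nat) (c : trace) : Prop :=
  h <= length (Theta B z) /\ prefix (Theta B z) c.

(* Compatibility orders the annotated nodes along a single path of TPM states.
   Between the step of z0, which produces ex(t0, m0), and the later step of z1,
   which consumes m1, the path only boots, extends or stays put.  If m1 has t,
   then either ex(t0, m0) survives inside m1, or some intermediate step extended
   by t.  That step is annotated by a node whose PCR strictly grows, which only
   the extend role can do, and its position on the path places it between z0 and
   z1 in the bundle order. *)
From Stdlib Require Import List Arith Relations Lia.
Import ListNotations.

Lemma pcr_inj (m m' : state) : pcr m = pcr m' -> m = m'.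
Proof.
  revert m'; induction m as [|t m IHm]; intros [|t' m'] E; try discriminate; auto.
  injection E as -> E; f_equal; auto.
Qed.

Lemma ex_neq (t : msg) (m : state) : ex t m <> m.
Proof.
  revert t; induction m as [|t' m IHm]; intros t E; [discriminate|].
  injection E as -> E; exact (IHm t' E).
Qed.

Lemma has_msg_ex (t' t : msg) (m : state) : has_msg (ex t' m) t -> t' = t \/ has_msg m t.
Proof.
  intros [m' Hs]; inversion Hs; subst; [left; reflexivity | right; exists m'; assumption].
Qed.

Lemma has_msg_path (pi : nat -> state) (t : msg) (i j : nat) :
  (forall n, leadsto (pi n) (pi (S n))) -> i <= j -> has_msg (pi j) t ->
  state_sub (pi i) (pi j) \/ exists k, i <= k < j /\ pi (S k) = ex t (pi k).
Proof.
  intros Hstep Hij; induction j as [|j IHj]; intros Ht.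
  - assert (i = 0) as -> by lia; left; constructor.
  - destruct (Nat.eq_dec i (S j)) as [-> | Hne]; [left; constructor|].
    specialize (IHj ltac:(lia)).
    destruct (Hstep j) as [E | [[t' E] | E]].
    + rewrite E in Ht; destruct Ht as [m' Hs]; inversion Hs.
    + rewrite E in Ht |- *; destruct (has_msg_ex _ _ _ Ht) as [-> | Ht'].
      * right; exists j; split; [lia | exact E].
      * destruct (IHj Ht') as [Hs | (k & Hk & Ek)].
        -- left; apply sub_ex; exact Hs.
        -- right; exists k; split; [lia | exact Ek].
    + rewrite <- E in Ht |- *; destruct (IHj Ht) as [Hs | (k & Hk & Ek)]; [left; exact Hs|].
      right; exists k; split; [lia | exact Ek].
Qed.

Section ExtendStrands.

Variable B : bundle.

Lemma htin_extend_trace (z : strand) (esk k p t : msg) :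
  htin B z 2 (extend esk k p t) -> Theta B z = extend esk k p t.
Proof.
  intros [Hlen [r Hr]].
  assert (Hlen' : length (extend esk k p t) = length (Theta B z) + length r)
    by (rewrite Hr; apply length_app).
  simpl in Hlen'; assert (r = []) as -> by (apply length_zero_iff_nil; lia).
  rewrite app_nil_r in Hr; auto.
Qed.

Lemma prec_extend_step (z : strand) (esk k p t : msg) :
  htin B z 2 (extend esk k p t) -> prec B (z, 0) (z, 1).
Proof.
  intros Hh; apply t_step; right.
  unfold succ_edge, is_node; simpl; rewrite (htin_extend_trace _ _ _ _ _ Hh); simpl; auto.
Qed.

(* No communication edge enters the transmission (z, 1). *)
Lemma prec_extend_send (a : node) (z : strand) (esk k p t : msg) :
  is_bundle B -> htin B z 2 (extend esk k p t) -> fst a <> z ->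
  prec B a (z, 1) -> prec B a (z, 0).
Proof.
  intros [_ [Hcomm _]] Hh Ha Hpr; pose proof (htin_extend_trace _ _ _ _ _ Hh) as E.
  apply clos_trans_tn1 in Hpr; inversion Hpr as [? Hedge | y ? Hedge Hpr']; subst;
    destruct Hedge as [Hc | (Hfst & Hsnd & _)].
  - destruct (Hcomm _ _ Hc) as (t' & _ & Hrcv).
    unfold ev in Hrcv; simpl in Hrcv; rewrite E in Hrcv; discriminate.
  - simpl in Hfst; congruence.
  - destruct (Hcomm _ _ Hc) as (t' & _ & Hrcv).
    unfold ev in Hrcv; simpl in Hrcv; rewrite E in Hrcv; discriminate.
  - destruct y as [zy iy]; simpl in *; subst zy; injection Hsnd as ->.
    apply clos_tn1_trans; exact Hpr'.
Qed.

Variable Pi : role -> Prop.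
Hypothesis HPi : protocol_ok Pi.

Lemma extend_annot (z : strand) (esk k p t : msg) :
  is_key esk -> is_key k -> htin B z 2 (extend esk k p t) ->
  annot Pi B (z, 1) p (Hash (Pair t p)).
Proof.
  intros Hesk Hk Hh; pose proof (htin_extend_trace _ _ _ _ _ Hh) as E.
  split; [unfold is_node; simpl; rewrite E; simpl; lia|].
  exists (extend_role esk k p t); split; [apply HPi; assumption|].
  split; [simpl; rewrite E; exists []; rewrite app_nil_r; reflexivity | reflexivity].
Qed.

(* Boot resets the PCR to s0 and quote/decrypt leave it unchanged; neither can
   produce pcr (ex t m) from pcr m. *)
Lemma annot_extension_is_extend (z : strand) (i : nat) (t : msg) (m : state) :
  annot Pi B (z, i) (pcr m) (pcr (ex t m)) ->
  i = 1 /\ exists esk k, is_key esk /\ is_key k /\ htin B z 2 (extend esk k (pcr m) t).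
Proof.
  intros [Hnode (r & Hr & Hpre & Hrs)].
  pose proof (proj2 (proj2 HPi) r Hr) as Hok; unfold role_ok in Hok; rewrite Hrs in Hok.
  destruct Hok as [_ [E | [E | (esk & k & t' & Hesk & Hk & ->)]]].
  - discriminate.
  - exfalso; apply (ex_neq t m), pcr_inj; exact E.
  - injection Hrs as Hsnd ->.
    simpl in *; subst i; split; [reflexivity|].
    exists esk, k; split; [exact Hesk|]; split; [exact Hk|].
    split; [unfold is_node in Hnode; simpl in Hnode; lia | exact Hpre].
Qed.

End ExtendStrands.

Theorem theorem1 (Pi : role -> Prop) (B : bundle) :
  protocol_ok Pi -> is_bundle B -> run_of Pi B -> compatible Pi B ->
  forall (z0 z1 : strand) (t t0 t1 : msg) (m0 m1 : state) (esk0 esk1 k0 k1 : msg),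
    is_key esk0 -> is_key esk1 -> is_key k0 -> is_key k1 ->
    htin B z0 2 (extend esk0 k0 (pcr m0) t0) ->
    htin B z1 2 (extend esk1 k1 (pcr m1) t1) ->
    prec B (z0, 1) (z1, 0) ->
    has_msg m1 t ->
    state_sub (ex t0 m0) m1 \/
    exists (z : strand) (m : state) (esk k : msg),
      is_key esk /\ is_key k /\
      htin B z 2 (extend esk k (pcr m) t) /\
      prec B (z0, 1) (z, 0) /\ prec B (z, 1) (z1, 0).
Proof.
  intros HPi HB _ (l & f & pi & [_ Hstep] & Hf_lt & _ & Hf_onto & Hf_prec & Hf_ann)
    z0 z1 t t0 t1 m0 m1 esk0 esk1 k0 k1 Hesk0 Hesk1 Hk0 Hk1 Hh0 Hh1 Hpr Ht.
  pose proof (extend_annot _ _ HPi _ _ _ _ _ Hesk0 Hk0 Hh0) as A0.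
  pose proof (extend_annot _ _ HPi _ _ _ _ _ Hesk1 Hk1 Hh1) as A1.
  assert (An0 : annotated Pi B (z0, 1)) by (do 2 eexists; exact A0).
  assert (An1 : annotated Pi B (z1, 1)) by (do 2 eexists; exact A1).
  destruct (Hf_ann _ _ _ A0) as (_ & E0 & _).
  change (Hash (Pair t0 (pcr m0))) with (pcr (ex t0 m0)) in E0.
  destruct (Hf_ann _ _ _ A1) as (E1 & _ & _).
  apply pcr_inj in E0; apply pcr_inj in E1; rewrite E1 in Ht.
  assert (Hlt : f (z0, 1) < f (z1, 1)).
  { apply Hf_prec; [exact An0 | exact An1 |].
    eapply t_trans; [exact Hpr | exact (prec_extend_step _ _ _ _ _ _ Hh1)]. }
  destruct (has_msg_path pi t (S (f (z0, 1))) (f (z1, 1)) Hstep Hlt Ht)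
    as [Hsub | (j & Hj & Ej)].
  { left; rewrite E0, E1; exact Hsub. }
  right.
  destruct (Hf_onto j ltac:(specialize (Hf_lt _ An1); lia)) as ([z i] & (p0 & p1 & An) & <-).
  destruct (Hf_ann _ _ _ An) as (-> & Ep1 & _); rewrite Ej in Ep1; subst p1.
  destruct (annot_extension_is_extend _ _ HPi _ _ _ _ An) as (-> & esk & k & Hesk & Hk & Hh).
  assert (Ann : annotated Pi B (z, 1)) by (do 2 eexists; exact An).
  exists z, (pi (f (z, 1))), esk, k; do 3 (split; [assumption|]); split.
  - apply prec_extend_send with (1 := HB) (2 := Hh); [simpl; intros ->; lia|].
    apply Hf_prec; [exact An0 | exact Ann | lia].
  - apply prec_extend_send with (1 := HB) (2 := Hh1); [simpl; intros ->; lia|].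
    apply Hf_prec; [exact Ann | exact An1 | lia].
Qed.
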